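(* Let $S$ be a finite, additively commutative, congruence-simple semiring with an infinity $\infty$ and with $|S|>2$. Then one of the following holds: (1) $S$ is additively idempotent, i.e. $x+x=x$ for all $x\in S$; (2) $x+y=\infty$ for all $x,y\in S$, and $(S,\cdot)$ is a congruence-free semigroup.
   Context: A semiring is a nonempty set $S$ with two associative binary operations $+$ and $\cdot$ satisfying both distributive laws $a(b+c)=ab+ac$ and $(a+b)c=ac+bc$; no identity elements are assumed. It is additively commutative if $(S,+)$ is commutative. An infinity of $S$ is an element $\infty$ with $\infty+x=x+\infty=\infty$ and $\infty x=x\infty=\infty$ for all $x\in S$. A congruence relation on $S$ is an equivalence relation $\sim$ such that $x_1\sim x_2$ implies $c+x_1\sim c+x_2$, $x_1+c\sim x_2+c$, $cx_1\sim cx_2$, $x_1c\sim x_2c$ for all $c\in S$. $S$ is congruence-simple if its only congruence relations are the identity relation and $S\times S$. A semigroup is congruence-free if its only congruences (equivalence relations compatible with left and right multiplication) are the identity relation and the full relation. *)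

From mathcomp Require Import all_boot.
Set Implicit Arguments. Unset Strict Implicit. Unset Printing Implicit Defensive.

Definition is_semiring (T : Type) (add mul : T -> T -> T) : Prop :=
  (forall a b c, add a (add b c) = add (add a b) c) /\
  (forall a b c, mul a (mul b c) = mul (mul a b) c) /\
  (forall a b c, mul a (add b c) = add (mul a b) (mul a c)) /\
  (forall a b c, mul (add a b) c = add (mul a c) (mul b c)).

Definition add_comm (T : Type) (add : T -> T -> T) : Prop :=
  forall a b, add a b = add b a.

Definition is_infinity (T : Type) (add mul : T -> T -> T) (inf : T) : Prop :=
  forall x, add inf x = inf /\ add x inf = inf /\ mul inf x = inf /\ mul x inf = inf.

Definition is_equivalence (T : Type) (r : T -> T -> Prop) : Prop :=
  (forall x, r x x) /\ (forall x y, r x y -> r y x) /\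
  (forall x y z, r x y -> r y z -> r x z).

Definition semiring_congruence (T : Type) (add mul : T -> T -> T)
  (r : T -> T -> Prop) : Prop :=
  is_equivalence r /\
  forall x1 x2 c, r x1 x2 ->
    r (add c x1) (add c x2) /\ r (add x1 c) (add x2 c) /\
    r (mul c x1) (mul c x2) /\ r (mul x1 c) (mul x2 c).

Definition semigroup_congruence (T : Type) (mul : T -> T -> T)
  (r : T -> T -> Prop) : Prop :=
  is_equivalence r /\
  forall x1 x2 c, r x1 x2 -> r (mul c x1) (mul c x2) /\ r (mul x1 c) (mul x2 c).

Definition congruence_simple (T : Type) (add mul : T -> T -> T) : Prop :=
  forall r, semiring_congruence add mul r ->
    (forall x y, r x y -> x = y) \/ (forall x y, r x y).

Definition congruence_free (T : Type) (mul : T -> T -> T) : Prop :=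
  forall r, semigroup_congruence mul r ->
    (forall x y, r x y -> x = y) \/ (forall x y, r x y).

From mathcomp Require Import all_boot fingroup perm zify.

(* The kernel of doubling is a congruence, so doubling is injective or
   constant.  If it is injective then, S being finite, some power of it is the
   identity, so (n+2)x = x for a fixed n; simplicity applied to the kernel of
   x |-> (n+1)x forces (n+1)x = x, whence x is idempotent.  Otherwise
   2x = 2∞ = ∞ for all x, so x = x + t forces x = ∞.  The Rees congruence
   collapsing S + S is then either trivial, so that all sums equal ∞ and every
   multiplicative congruence is a semiring congruence, or full, so that every
   element is a sum; the latter is impossible, since x = a + b with x ≠ ∞ makes
   x + S a proper subset of a + S, contradicting the choice of x with x + S
   largest. *)

Set Implicit Arguments.
Unset Strict Implicit.

Section AdditiveSemigroup.

Variables (T : Type) (add : T -> T -> T).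
Hypothesis addA : associative add.

(* [smul n x] is the sum of n.+1 copies of x. *)
Definition smul (n : nat) (x : T) : T := iter n (add x) x.

Definition is_sum (x : T) : Prop := exists a b, x = add a b.

Lemma smulD m n x : smul (m + n).+1 x = add (smul m x) (smul n x).
Proof. by elim: m => //= m IHm; rewrite IHm addA. Qed.

Lemma smul_idem n e : add e e = e -> smul n e = e.
Proof. by move=> ee; elim: n => //= n IHn; rewrite IHn ee. Qed.

Lemma smul_absorb n y x : add y x = x -> add y (smul n x) = smul n x.
Proof. by move=> yx; elim: n => //= n _; rewrite addA yx. Qed.

Lemma iter_double m x : iter m (fun y => add y y) x = smul (2 ^ m).-1 x.
Proof.
elim: m => //= m ->; rewrite -smulD; congr smul.
by have := expn_gt0 2 m; rewrite expnS; lia.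
Qed.

Variable inf : T.
Hypotheses (add_infr : right_zero inf add) (double_inf : forall x, add x x = inf).

Lemma absorbed_eq_inf x t : x = add x t -> x = inf.
Proof. by move=> xt; rewrite xt {1}xt -addA double_inf add_infr. Qed.

End AdditiveSemigroup.

Section FiniteAdditiveSemigroup.

Variables (S : finType) (add : S -> S -> S).
Hypothesis addA : associative add.

Lemma periodic_of_double_inj :
  injective (fun x => add x x) -> exists n, forall x, smul add n.+1 x = x.
Proof.
move=> double_inj; pose p := perm double_inj.
have two_le : 2 <= 2 ^ #[p]%g by rewrite -{1}(expn1 2) leq_pexp2l ?order_gt0.
exists (2 ^ #[p]%g).-2 => x.
have -> : (2 ^ #[p]%g).-2.+1 = (2 ^ #[p]%g).-1 by lia.
rewrite -iter_double // -(eq_iter (permE double_inj)) -permX.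
by rewrite (expg_order p) perm1.
Qed.

Variable inf : S.
Hypotheses (add_infl : left_zero inf add) (add_infr : right_zero inf add).
Hypothesis double_inf : forall x, add x x = inf.

Lemma all_inf_of_all_sums : (forall x, is_sum add x) -> forall x, x = inf.
Proof.
move=> all_sums x0; apply/eqP/negPn/negP => x0_inf.
pose D x := [set add x s | s : S].
case: (@arg_maxnP _ x0 (fun x => x != inf) (fun x => #|D x|) x0_inf) => x x_inf maxD.
have [a [b x_ab]] := all_sums x.
have a_inf : a != inf by apply: contra_neq x_inf => a_inf; rewrite x_ab a_inf add_infl.
suff : #|D x| < #|D a| by rewrite ltnNge => /negP; apply; exact: maxD.
apply/proper_card/properP; split.
- apply/subsetP => _ /imsetP[s _ ->]; apply/imsetP.
  by exists (add b s); rewrite // x_ab addA.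
- exists x; first by apply/imsetP; exists b.
  apply/imsetP => -[s _ x_s]; move/eqP: x_inf; apply.
  exact: absorbed_eq_inf x_s.
Qed.

End FiniteAdditiveSemigroup.

Section SemiringCongruences.

Variables (T : Type) (add mul : T -> T -> T).
Hypotheses (addA : associative add) (mulDr : right_distributive mul add)
  (mulDl : left_distributive mul add).

Definition sum_rel (x y : T) : Prop := x = y \/ is_sum add x /\ is_sum add y.

Lemma sum_rel_congruence : semiring_congruence add mul sum_rel.
Proof.
split.
  split; first by left.
  split; first by move=> x y [->|[]]; [left|right].
  move=> x y z [->|[sx sy]] [<-|[sy' sz]]; [by left|by right|by right|by right].
move=> x1 x2 c [->|[[a1 [b1 ->]] [a2 [b2 ->]]]]; first by do !split; left.
do !split; right; split.
- by exists (add c a1), b1; rewrite addA.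
- by exists (add c a2), b2; rewrite addA.
- by exists a1, (add b1 c); rewrite addA.
- by exists a2, (add b2 c); rewrite addA.
- by exists (mul c a1), (mul c b1); rewrite mulDr.
- by exists (mul c a2), (mul c b2); rewrite mulDr.
- by exists (mul a1 c), (mul b1 c); rewrite mulDl.
- by exists (mul a2 c), (mul b2 c); rewrite mulDl.
Qed.

Lemma congruence_free_of_add_const (k : T) :
  (forall x y, add x y = k) -> congruence_simple add mul -> congruence_free mul.
Proof.
move=> add_const simple r [r_equiv r_mul]; apply: simple; split => // x1 x2 c r12.
have [r_l r_r] := r_mul _ _ c r12.
by rewrite !add_const; do !split => //; apply: r_equiv.1.
Qed.

Hypothesis addC : commutative add.

Lemma smul_add n a b : smul add n (add a b) = add (smul add n a) (smul add n b).
Proof.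
elim: n => //= n ->.
by rewrite -!addA; congr add; rewrite !addA (addC b).
Qed.

Lemma smul_mull n c x : smul add n (mul c x) = mul c (smul add n x).
Proof. by elim: n => //= n ->; rewrite mulDr. Qed.

Lemma smul_mulr n c x : smul add n (mul x c) = mul (smul add n x) c.
Proof. by elim: n => //= n ->; rewrite mulDl. Qed.

Definition smul_eq (n : nat) (x y : T) : Prop := smul add n x = smul add n y.

Lemma smul_eq_congruence n : semiring_congruence add mul (smul_eq n).
Proof.
rewrite /smul_eq; split; first by split; [|split] => // x y z ->.
move=> x1 x2 c e12.
rewrite !smul_add !(smul_mull n c) !(smul_mulr n c).
by rewrite e12.
Qed.

Variable inf : T.
Hypothesis add_infl : left_zero inf add.

Lemma idempotent_of_periodic n :
  congruence_simple add mul -> (exists x, x <> inf) ->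
  (forall x, smul add n.+1 x = x) -> forall x, add x x = x.
Proof.
move=> simple [x0 x0_inf] periodic.
pose e := smul add n.
have e_absorb x : add (e x) x = x by rewrite -[RHS]periodic -[n.+1]addn0 smulD.
have e_idem x : add (e x) (e x) = e x by apply: smul_absorb.
case: (simple _ (smul_eq_congruence n)) => [smul_inj | smul_full].
- move=> x; have ex : e x = x by apply: smul_inj; rewrite /smul_eq smul_idem.
  by rewrite -ex.
- case: x0_inf; rewrite -(e_absorb x0) /e (smul_full x0 inf).
  by rewrite smul_idem ?add_infl.
Qed.

End SemiringCongruences.

Lemma exists_neq (S : finType) (x : S) : 1 < #|S| -> exists y, y <> x.
Proof.
case/card_gt1P => [a [b [_ _ /eqP ab]]].
by case: (eqVneq a x) => [<-|/eqP ax]; [exists b => /esym | exists a].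
Qed.

Theorem lemma3p1 (S : finType) (add mul : S -> S -> S) (inf : S) :
  is_semiring add mul -> add_comm add -> congruence_simple add mul ->
  is_infinity add mul inf -> 2 < #|S| ->
  (forall x, add x x = x) \/
  ((forall x y, add x y = inf) /\ congruence_free mul).
Proof.
move=> [addA [_ [mulDr mulDl]]] addC simple infS cardS.
have add_infl : left_zero inf add by move=> x; case: (infS x).
have add_infr : right_zero inf add by move=> x; case: (infS x) => _ [].
have other x : exists y, y <> x := exists_neq x (ltnW cardS).
case: (simple _ (smul_eq_congruence addA mulDr mulDl addC 1)) => [dinj | dfull].
  have [n periodic] := periodic_of_double_inj addA dinj.
  by left; apply: (idempotent_of_periodic addA mulDr mulDl addC add_infl simple).
have double_inf x : add x x = inf by have := dfull x inf; rewrite /smul_eq /= add_infl.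
right; case: (simple _ (sum_rel_congruence addA mulDr mulDl)) => [sum_id | sum_full].
  have sums_inf x y : add x y = inf.
    by apply: sum_id; right; split; [exists x, y | exists inf, inf].
  by split => //; apply: congruence_free_of_add_const sums_inf simple.
exfalso; have [x x_inf] := other inf; apply: x_inf.
apply: (all_inf_of_all_sums addA add_infl add_infr double_inf) => y.
have [z zy] := other y.
by case: (sum_full y z) => [/esym/zy|[]].
Qed.
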